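(* Let $\{(X_s,\tau_s):s\in S\}$ be a family of fuzzifying topological spaces, $X=\prod_{s\in S}X_s$, and let $\Pi=\prod_{s\in S}(\tau_P)_s\in\Im(P(X))$ be the product pre-open family described below. Then $$\sup_{U\subseteq X}\min\Big(\Gamma(U,\Pi/U),\ \sup_{x\in X}N^\Pi_x(U)\Big)\ \le\ \sup_{T\subseteq S,\ T\text{ finite}}\ \inf_{t\in S\setminus T}\Gamma(X_t,(\tau_P)_t).$$
   Context: Fuzzy subsets of $Y$ are maps $Y\to[0,1]$ ($\Im(Y)$); $P(X)$ is the power set. A fuzzifying topology on a set $Z$ is $\tau\in\Im(P(Z))$ with $\tau(Z)=1$, closed (in degree) under finite intersections ($\tau(A\cap B)\ge\min$) and arbitrary unions ($\tau(\bigcup A_\lambda)\ge\inf$). For such $\tau$: $N_x(A)=\sup_{x\in B\subseteq A}\tau(B)$, $Cl(A)(x)=1-N_x(Z\setminus A)$, for $\mu\in\Im(Z)$ $Int(\mu)(x)=\sup_{x\in B}\min(\tau(B),\inf_{y\in B}\mu(y))$, and the fuzzifying pre-open sets are $\tau_P(A)=\inf_{x\in A}Int(Cl(A))(x)$. For the product: $p_s:X\to X_s$ are projections, $\varphi=\{p_s^{-1}(U_s):s\in S,U_s\subseteq X_s\}$; a finite $\Phi\subseteq\varphi$ is written $\Phi=\{p_s^{-1}(V_s):s\in S(\Phi)\}$; $\beta_P(V)=\sup\{\inf_{s\in S(\Phi)}(\tau_P)_s(V_s):\Phi\subseteq\varphi\text{ finite},\ \bigcap\Phi=V\}$, and $\Pi(A)=\sup\{\inf_\lambda\beta_P(B_\lambda):\bigcup_\lambda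 B_\lambda=A\}$. $N^\Pi_x(U)=\sup_{x\in V\subseteq U}\Pi(V)$. For $U\subseteq X$, $(\Pi/U)(B)=\sup\{\Pi(V):V\cap U=B\}$. Compactness degree: for a set $A$ and $\rho\in\Im(P(A))$, with $K(\Re,A)=\inf_{x\in A}\sup_{B\ni x}\Re(B)$, $[\Re\subseteq\rho]=\inf_B\min(1,1-\Re(B)+\rho(B))$, $\wp\le\Re$ meaning pointwise $\le$, and $FF(\wp)=1-\inf\{\delta\in[0,1]:\{B:\wp(B)>\delta\}\text{ finite}\}$, set $\Gamma(A,\rho)=\inf_{\Re\in\Im(P(A))}\min\big(1,1-\max(0,K(\Re,A)+[\Re\subseteq\rho]-1)+\sup_{\wp\le\Re}\max(0,K(\wp,A)+FF(\wp)-1)\big)$. Thus $\Gamma(X_t,(\tau_P)_t)$ is the degree of fuzzifying strong compactness of $(X_t,\tau_t)$. *)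

(* membership degrees are reals of an arbitrary realType R
   (all properties only use values in [0,1]). *)
From HB Require Import structures.
From mathcomp Require Import all_boot all_order all_algebra.
From mathcomp Require Import all_classical all_reals.
Set Implicit Arguments.
Unset Strict Implicit.
Unset Printing Implicit Defensive.
Import Order.TTheory GRing.Theory Num.Theory.
Local Open Scope classical_set_scope.
Local Open Scope ring_scope.

Section FuzzyDefs.
Variable R : realType.

(* Supremum / infimum in [0,1]: sup of the empty set is 0, inf of the empty set is 1. *)
Definition fsup (A : set R) : R := sup (A `|` [set 0]).
Definition finf (A : set R) : R := inf (A `|` [set 1]).

Definition is_fuzzy (T : Type) (f : T -> R) : Prop := forall x, 0 <= f x <= 1.

Definition fuzzifying_topology (Z : Type) (tau : set Z -> R) : Prop :=
  [/\ is_fuzzy tau,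
      tau setT = 1,
      (forall A B : set Z, Num.min (tau A) (tau B) <= tau (A `&` B)) &
      (forall F : set (set Z), finf (tau @` F) <= tau (\bigcup_(A in F) A))].

Section OneSpace.
Variables (Z : Type) (tau : set Z -> R).

Definition fnbhd (x : Z) (A : set Z) : R :=
  fsup [set tau B | B in [set B : set Z | B x /\ B `<=` A]].

Definition fclosure (A : set Z) (x : Z) : R := 1 - fnbhd x (~` A).

Definition finterior (mu : Z -> R) (x : Z) : R :=
  fsup [set Num.min (tau B) (finf (mu @` B)) | B in [set B : set Z | B x]].

Definition preopen (A : set Z) : R :=
  finf [set finterior (fclosure A) x | x in A].
End OneSpace.

Section Product.
Variables (S : Type) (Xs : S -> Type) (tau : forall s, set (Xs s) -> R).

Definition prodX := forall s, Xs s.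

(* beta_P(V): sup over finite Phi = {p_s^{-1}(V_s) : s in S(Phi)} with
   intersection V of inf_{s in S(Phi)} (tau_P)_s(V_s). *)
Definition betaP (V : set prodX) : R :=
  fsup [set r | exists (T : set S) (W : forall s, set (Xs s)),
          [/\ finite_set T,
              [set x : prodX | forall s, T s -> W s (x s)] = V &
              r = finf [set preopen (@tau i) (W i) | i in T]]].

Definition PiP (A : set prodX) : R :=
  fsup [set finf (betaP @` F) | F in [set F : set (set prodX) |
                                       \bigcup_(B in F) B = A]].

Definition nbhdPi (x : prodX) (U : set prodX) : R := fnbhd PiP x U.

(* (Pi/U)(B) = sup {Pi(V) : V cap U = B}  (only used for B subset of U) *)
Definition PiRestr (U : set prodX) (B : set prodX) : R :=
  fsup [set PiP V | V in [set V : set prodX | V `&` U = B]].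
End Product.

Section Compactness.
Variables (T : Type) (A : set T).
(* fuzzy families on P(A) are represented by maps set T -> R;
   only their values on subsets of A are ever used. *)

Definition Kdeg (Re : set T -> R) : R :=
  finf [set fsup [set Re B | B in [set B : set T | B `<=` A /\ B x]] | x in A].

Definition incl_deg (Re rho : set T -> R) : R :=
  finf [set Num.min 1 (1 - Re B + rho B) | B in [set B : set T | B `<=` A]].

Definition FFdeg (P : set T -> R) : R :=
  1 - finf [set d | 0 <= d <= 1 /\
                    finite_set [set B : set T | B `<=` A /\ d < P B]].

Definition Gamma (rho : set T -> R) : R :=
  finf [set Num.min 1 (1 - Num.max 0 (Kdeg Re + incl_deg Re rho - 1)
          + fsup [set Num.max 0 (Kdeg P + FFdeg P - 1) |
                  P in [set P : set T -> R | is_fuzzy P /\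
                        (forall B, B `<=` A -> P B <= Re B)]])
        | Re in [set Re : set T -> R | is_fuzzy Re]].
End Compactness.
End FuzzyDefs.

From HB Require Import structures.
From mathcomp Require Import all_boot all_order all_algebra.
From mathcomp Require Import all_classical all_reals.
From mathcomp Require Import lra.
Set Implicit Arguments.
Unset Strict Implicit.
Unset Printing Implicit Defensive.
Import Order.TTheory GRing.Theory Num.Theory.
Local Open Scope classical_set_scope.
Local Open Scope ring_scope.

(* A point with positive Pi-neighbourhood degree in U lies in a basic box
   prod_(s in T) W_s contained in U, with T finite.  For t outside T, moving a
   point of the box along the t-th coordinate stays in the box, so the
   projection p_t maps U onto X_t; it is also continuous from (U, Pi/U) to
   (X_t, (tau_P)_t), since (tau_P)_t(W) <= beta_P(p_t^-1 W) <= Pi(p_t^-1 W).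
   The compactness degree Gamma can only grow along continuous surjections, so
   Gamma(U, Pi/U) <= inf_(t notin T) Gamma(X_t, (tau_P)_t). *)

Section BoundedSupInf.
Variable R : realType.
Implicit Types (A : set R) (a m M : R).

Lemma fsup_ge0 A : 0 <= fsup A.
Proof.
rewrite /fsup; have [hub|nub] := pselect (has_ubound (A `|` [set 0])).
  by apply: ub_le_sup => //; right.
by rewrite sup_out // => -[].
Qed.

Lemma fsup_ub A M a : (forall b, A b -> b <= M) -> A a -> a <= fsup A.
Proof.
move=> AM Aa; apply: ub_le_sup; last by left.
by exists (Num.max M 0) => b [/AM bM|->]; rewrite le_max ?bM ?lexx ?orbT.
Qed.

Lemma ge_fsup A M : 0 <= M -> (forall b, A b -> b <= M) -> fsup A <= M.
Proof.
move=> M0 AM; apply: ge_sup; first by exists 0; right.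
by move=> b [/AM|->].
Qed.

Lemma fsup_gt0 A : 0 < fsup A -> exists2 a, A a & 0 < a.
Proof.
move=> A_gt0; apply: contrapT => noA; move: A_gt0; apply/negP; rewrite -leNgt.
by apply: ge_fsup => // b Ab; rewrite leNgt; apply/negP => b0; apply: noA; exists b.
Qed.

Lemma finf_le1 A : finf A <= 1.
Proof.
rewrite /finf; have [hlb|nlb] := pselect (has_lbound (A `|` [set 1])).
  by apply: ge_inf => //; right.
by rewrite inf_out // => -[].
Qed.

Lemma finf_lb A m a : (forall b, A b -> m <= b) -> A a -> finf A <= a.
Proof.
move=> Am Aa; apply: ge_inf; last by left.
by exists (Num.min m 1) => b [/Am mb|->]; rewrite ge_min ?mb ?lexx ?orbT.
Qed.

Lemma le_finf A m : m <= 1 -> (forall b, A b -> m <= b) -> m <= finf A.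
Proof.
move=> m1 Am; apply: lb_le_inf; first by exists 1; right.
by move=> b [/Am|->].
Qed.

Lemma finf_set1 a : a <= 1 -> finf [set a] = a.
Proof.
move=> a1; apply/le_anti/andP; split; first by apply: (@finf_lb _ _ a) => // b ->.
by apply: le_finf => // b ->.
Qed.

End BoundedSupInf.

Arguments fsup_ub {R A} M {a}.
Arguments finf_lb {R A} m {a}.

(* Łukasiewicz conjunction and implication, the truth values of the fuzzy
   logic in which the degree of compactness is written. *)
Section Lukasiewicz.
Variable R : realType.
Implicit Types a b : R.

Definition luk_conj a b : R := Num.max 0 (a + b - 1).
Definition luk_impl a b : R := Num.min 1 (1 - a + b).

Lemma luk_conj_le1 a b : a <= 1 -> b <= 1 -> luk_conj a b <= 1.
Proof. by move=> a1 b1; rewrite ge_max ler01 /=; lra. Qed.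

Lemma luk_conj_le a1 a2 b1 b2 :
  a1 <= a2 -> b1 <= b2 -> luk_conj a1 b1 <= luk_conj a2 b2.
Proof. by move=> ha hb; rewrite ge_max !le_max lexx /=; apply/orP; right; lra. Qed.

Lemma luk_impl_le a1 a2 b1 b2 :
  a2 <= a1 -> b1 <= b2 -> luk_impl a1 b1 <= luk_impl a2 b2.
Proof. by move=> ha hb; rewrite le_min !ge_min lexx /=; apply/orP; right; lra. Qed.

Lemma luk_impl_ge0 a b : a <= 1 -> 0 <= b -> 0 <= luk_impl a b.
Proof. by move=> a1 b0; rewrite le_min ler01 /=; lra. Qed.

Lemma luk_impl0 b : 0 <= b -> luk_impl 0 b = 1.
Proof. by move=> b0; apply/min_idPl; lra. Qed.

End Lukasiewicz.

Section CompactnessDegree.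
Variables (R : realType) (T : Type) (A : set T).

Lemma FFdeg_le1 (P : set T -> R) : FFdeg A P <= 1.
Proof.
rewrite /FFdeg; suff : 0 <= finf [set d : R | 0 <= d <= 1 /\
                   finite_set [set B : set T | B `<=` A /\ d < P B]] by lra.
by apply: le_finf => // d [/andP[]].
Qed.

Definition subfamily (Re P : set T -> R) : Prop :=
  is_fuzzy P /\ forall B, B `<=` A -> P B <= Re B.

(* The degree of "if Re is an open cover of A, then some subfamily of Re is a
   finite cover of A"; Gamma is its infimum over all fuzzy families Re. *)
Definition Gamma_cover (rho Re : set T -> R) : R :=
  luk_impl (luk_conj (Kdeg A Re) (incl_deg A Re rho))
    (fsup [set luk_conj (Kdeg A P) (FFdeg A P) | P in subfamily Re]).

Lemma Gamma_cover_ge0 rho Re : 0 <= Gamma_cover rho Re.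
Proof.
by apply: luk_impl_ge0; rewrite ?luk_conj_le1 ?finf_le1 ?fsup_ge0.
Qed.

Lemma Gamma_le_cover rho Re : is_fuzzy Re -> Gamma A rho <= Gamma_cover rho Re.
Proof.
move=> Re_fuzzy; apply: (finf_lb 0); last by exists Re.
by move=> _ [Re' _ <-]; exact: Gamma_cover_ge0.
Qed.

Lemma ge_Gamma rho (g : R) : g <= 1 ->
  (forall Re, is_fuzzy Re -> g <= Gamma_cover rho Re) -> g <= Gamma A rho.
Proof. by move=> g1 gRe; apply: le_finf => // _ [Re /gRe gRe' <-]. Qed.

End CompactnessDegree.

Section ContinuousImage.
Variables (R : realType) (T1 T2 : Type) (A : set T1) (f : T1 -> T2).
Variables (rho1 : set T1 -> R) (rho2 : set T2 -> R).
Hypothesis f_onto : forall y, exists2 x, A x & f x = y.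
Hypothesis f_cont : forall W, rho2 W <= rho1 (A `&` f @^-1` W).
Hypothesis rho1_ge0 : forall C, 0 <= rho1 C.
Hypothesis rho2_ge0 : forall W, 0 <= rho2 W.

Let pre W := A `&` f @^-1` W.

Lemma image_pre W : f @` pre W = W.
Proof.
apply/seteqP; split => [_ [x [_ Wfx] <-] //|y Wy].
by have [x Ax fxy] := f_onto y; exists x; rewrite // /pre /= fxy.
Qed.

Lemma pre_inj : injective pre.
Proof. by move=> W1 W2 eW; rewrite -[W1]image_pre eW image_pre. Qed.

Definition pullback (Re : set T2 -> R) (C : set T1) : R :=
  if pselect (exists W, C = pre W) then Re (f @` C) else 0.

Lemma pullback_pre Re W : pullback Re (pre W) = Re W.
Proof.
rewrite /pullback; case: pselect => [preW|[]]; last by exists W.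
by rewrite image_pre.
Qed.

Lemma pullback_out Re C : ~ (exists W, C = pre W) -> pullback Re C = 0.
Proof. by rewrite /pullback; case: pselect. Qed.

Lemma pullback_fuzzy Re : is_fuzzy Re -> is_fuzzy (pullback Re).
Proof.
move=> Re_fuzzy C; rewrite /pullback.
by case: pselect => preC; [exact: Re_fuzzy|rewrite lexx ler01].
Qed.

Lemma Kdeg_pullback Re : is_fuzzy Re -> Kdeg setT Re <= Kdeg A (pullback Re).
Proof.
move=> Re_fuzzy; apply: le_finf; first exact: finf_le1.
move=> _ [x Ax <-].
apply: (@le_trans _ _ (fsup [set Re W | W in [set W | W `<=` setT /\ W (f x)]])).
  by apply: (finf_lb 0); [move=> _ [y _ <-]; exact: fsup_ge0|exists (f x)].
apply: ge_fsup => [|_ [W [_ Wfx] <-]]; first exact: fsup_ge0.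
rewrite -pullback_pre; apply: (fsup_ub 1).
  by move=> _ [B _ <-]; case/andP: (pullback_fuzzy Re_fuzzy B).
by exists (pre W) => //; split=> //; exact: subIsetl.
Qed.

Lemma incl_deg_pullback Re : is_fuzzy Re ->
  incl_deg setT Re rho2 <= incl_deg A (pullback Re) rho1.
Proof.
move=> Re_fuzzy; apply: le_finf; first exact: finf_le1.
move=> _ [C CA <-]; have [[W ->]|notpre] := pselect (exists W, C = pre W).
  rewrite pullback_pre; apply: le_trans (luk_impl_le (lexx _) (f_cont W)).
  apply: (finf_lb 0); last by exists W.
  by move=> _ [B _ <-]; apply: luk_impl_ge0; [case/andP: (Re_fuzzy B)|].
by rewrite pullback_out // [X in _ <= X]luk_impl0 ?finf_le1.
Qed.

Lemma Kdeg_push Re (P : set T1 -> R) : is_fuzzy P ->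
  (forall C, C `<=` A -> P C <= pullback Re C) -> Kdeg A P <= Kdeg setT (P \o pre).
Proof.
move=> P_fuzzy P_le; apply: le_finf; first exact: finf_le1.
move=> _ [y _ <-]; have [x Ax fxy] := f_onto y.
apply: (@le_trans _ _ (fsup [set P C | C in [set C | C `<=` A /\ C x]])).
  by apply: (finf_lb 0); [move=> _ [z _ <-]; exact: fsup_ge0|exists x].
apply: ge_fsup => [|_ [C [CA Cx] <-]]; first exact: fsup_ge0.
have [[W eC]|notpre] := pselect (exists W, C = pre W).
  apply: (fsup_ub 1); first by move=> _ [B _ <-]; case/andP: (P_fuzzy (pre B)).
  by exists W; rewrite /= -?eC //; split=> //; rewrite -fxy; move: Cx; rewrite eC => -[].
by apply: le_trans (P_le _ CA) _; rewrite pullback_out ?fsup_ge0.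
Qed.

Lemma FFdeg_push (P : set T1 -> R) : FFdeg A P <= FFdeg setT (P \o pre).
Proof.
rewrite /FFdeg lerD2l lerN2; apply: le_finf; first exact: finf_le1.
move=> d [d01 finP]; apply: (finf_lb 0); first by move=> b [/andP[]].
split=> //; have -> : [set W | W `<=` setT /\ d < (P \o pre) W] =
    pre @^-1` [set C | C `<=` A /\ d < P C].
  by apply/seteqP; split=> [W [_ dW]|W [_ dW]] //; split=> //; exact: subIsetl.
by apply: finite_preimage => // W1 W2 _ _; exact: pre_inj.
Qed.

Lemma Gamma_cover_pullback Re : is_fuzzy Re ->
  Gamma_cover A rho1 (pullback Re) <= Gamma_cover setT rho2 Re.
Proof.
move=> Re_fuzzy; apply: luk_impl_le.
  by apply: luk_conj_le; [exact: Kdeg_pullback|exact: incl_deg_pullback].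
apply: ge_fsup => [|_ [P [P_fuzzy P_le] <-]]; first exact: fsup_ge0.
apply: le_trans (luk_conj_le (Kdeg_push P_fuzzy P_le) (FFdeg_push P)) _.
apply: (fsup_ub 1); first by move=> _ [Q _ <-]; rewrite luk_conj_le1 ?finf_le1 ?FFdeg_le1.
exists (P \o pre) => //; split=> [W|W _]; first exact: P_fuzzy.
by rewrite -(pullback_pre Re W); apply: P_le; exact: subIsetl.
Qed.

Lemma Gamma_le_image : Gamma A rho1 <= Gamma setT rho2.
Proof.
apply: ge_Gamma => [|Re Re_fuzzy]; first exact: finf_le1.
apply: le_trans (Gamma_cover_pullback Re_fuzzy).
exact/Gamma_le_cover/pullback_fuzzy.
Qed.

End ContinuousImage.

Lemma preopen_ge0 (R : realType) (Z : Type) (tau : set Z -> R) (A : set Z) :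
  0 <= preopen tau A.
Proof. by apply: le_finf => // _ [z _ <-]; exact: fsup_ge0. Qed.

Section ProductPreopen.
Variables (R : realType) (S : Type) (Xs : S -> Type).
Variable tau : forall s, set (Xs s) -> R.
Arguments tau : clear implicits.

Definition box (T : set S) (W : forall s, set (Xs s)) : set (prodX Xs) :=
  [set x | forall s, T s -> W s (x s)].

Lemma betaP_le1 V : betaP tau V <= 1.
Proof. by apply: ge_fsup => // r [T [W [_ _ ->]]]; exact: finf_le1. Qed.

Lemma PiP_le1 V : PiP tau V <= 1.
Proof. by apply: ge_fsup => // _ [F _ <-]; exact: finf_le1. Qed.

Lemma preopen_le_betaP_proj (t : S) (W : set (Xs t)) :
  preopen (tau t) W <= betaP tau ((proj t) @^-1` W).
Proof.
pose W' s : set (Xs s) := fun y => forall e : s = t, W (eq_rect s Xs y t e).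
have W't : W' t = W.
  apply/funext => y; apply/propext; split=> [/(_ erefl) //|Wy e].
  by rewrite (Prop_irrelevance e erefl).
apply: (fsup_ub 1); first by move=> r [T [W0 [_ _ ->]]]; exact: finf_le1.
exists [set t], W'; split; first exact: finite_set1.
  by apply/seteqP; split=> [x /(_ t erefl)|x Wx s ->]; rewrite W't.
by rewrite image_set1 W't finf_set1 // finf_le1.
Qed.

Lemma betaP_le_PiP V : betaP tau V <= PiP tau V.
Proof.
apply: (fsup_ub 1); first by move=> _ [F _ <-]; exact: finf_le1.
exists [set V]; first by rewrite /= bigcup_set1.
by rewrite image_set1 finf_set1 // betaP_le1.
Qed.

Lemma PiP_le_PiRestr U V : PiP tau V <= PiRestr tau U (U `&` V).
Proof.
apply: (fsup_ub 1); first by move=> _ [V' _ <-]; exact: PiP_le1.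
by exists V => //; rewrite setIC.
Qed.

Lemma preopen_le_PiRestr_proj U (t : S) (W : set (Xs t)) :
  preopen (tau t) W <= PiRestr tau U (U `&` (proj t) @^-1` W).
Proof.
apply: le_trans (@preopen_le_betaP_proj t W) _.
exact: le_trans (betaP_le_PiP _) (PiP_le_PiRestr U _).
Qed.

Lemma betaP_gt0_box V : 0 < betaP tau V ->
  exists T W, finite_set T /\ box T W = V.
Proof. by case/fsup_gt0 => _ [T [W [finT boxV _]]] _; exists T, W. Qed.

Lemma PiP_gt0_cover V x : 0 < PiP tau V -> V x ->
  exists2 B, B x /\ B `<=` V & 0 < betaP tau B.
Proof.
case/fsup_gt0 => _ [F FV <-] F_gt0; rewrite -FV => -[B FB Bx].
exists B; first by split=> // y By; exists B.
apply: lt_le_trans F_gt0 _; apply: (finf_lb 0); last by exists B.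
by move=> _ [C _ <-]; exact: fsup_ge0.
Qed.

Lemma nbhdPi_gt0_box x U : 0 < nbhdPi tau x U ->
  exists T W, [/\ finite_set T, box T W x & box T W `<=` U].
Proof.
case/fsup_gt0 => _ [V [Vx VU] <-] /PiP_gt0_cover/(_ Vx) [B [Bx BV]].
case/betaP_gt0_box => T [W [finT WB]]; exists T, W; rewrite WB.
by split=> //; exact: subset_trans BV VU.
Qed.

Lemma proj_onto_box T W x t : box T W x -> ~ T t ->
  forall y : Xs t, exists2 z, box T W z & proj t z = y.
Proof.
move=> Wx nTt y; exists (@dfwith {classic S} Xs x t y); last exact: projK.
move=> s Ts; rewrite dfwithout; first exact: Wx.
by apply/eqP => ts; apply: nTt; rewrite ts.
Qed.

Lemma Gamma_PiRestr_le_factor U T W x t :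
  box T W x -> box T W `<=` U -> ~ T t ->
  Gamma U (PiRestr tau U) <= Gamma setT (preopen (tau t)).
Proof.
move=> Wx WU nTt; apply: (@Gamma_le_image _ _ _ U (proj t)).
- by move=> y; have [z Wz <-] := proj_onto_box Wx nTt y; exists z => //; exact: WU.
- exact: preopen_le_PiRestr_proj.
- by move=> C; exact: fsup_ge0.
- exact: preopen_ge0.
Qed.

End ProductPreopen.

Theorem theorem3p2 (R : realType) (S : Type) (Xs : S -> Type)
  (tau : forall s : S, set (Xs s) -> R)
  (htau : forall s : S, fuzzifying_topology (tau s)) :
  fsup [set Num.min (Gamma U (PiRestr tau U))
                    (fsup [set nbhdPi tau x U | x in [set: prodX Xs]])
       | U in [set: set (prodX Xs)]]
  <= fsup [set finf [set Gamma [set: Xs t] (preopen (tau t)) | t in ~` T]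
          | T in [set T : set S | finite_set T]].
Proof.
apply: ge_fsup => [|_ [U _ <-]]; first exact: fsup_ge0.
have [nb_le0|] := leP (fsup [set nbhdPi tau x U | x in [set: prodX Xs]]) 0.
  by rewrite ge_min; apply/orP; right; exact: le_trans nb_le0 (fsup_ge0 _).
case/fsup_gt0 => _ [x _ <-] /nbhdPi_gt0_box [T [W [finT Wx WU]]].
have Gamma_le_factors :
    Gamma U (PiRestr tau U) <= finf [set Gamma setT (preopen (tau t)) | t in ~` T].
  apply: le_finf => [|_ [t nTt <-]]; first exact: finf_le1.
  exact: Gamma_PiRestr_le_factor Wx WU nTt.
rewrite ge_min; apply/orP; left; apply: le_trans Gamma_le_factors _.
apply: (fsup_ub 1); last by exists T.
by move=> _ [T' _ <-]; exact: finf_le1.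
Qed.
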